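(* Let $n=p_1^{m_1}\cdots p_k^{m_k}$ be neither prime nor the square of a prime, and let $T=\prod_{i=1}^k(m_i+1)-2$. Then $$\kappa(\mathcal E_{\mathbb Z_n})=\begin{cases}T-1,& k=1,\ m_1>2,\\ 1,& k>1,\ m_i=1\text{ for all }i,\\ m+\eta,& k>1,\ m_i>1\text{ for at least one }i,\end{cases}$$ where $m=\prod_{i=1}^k m_i-1$ and $\eta=\min_{1\le j\le k}\big|[\langle p_j^{m_j}\rangle]\big|=\min_{1\le j\le k}\prod_{i\ne j}m_i$.
   Context: Primes $p_1<\dots<p_k$, positive integers $m_i$. Nonzero proper ideals of $\mathbb Z_n$ are uniquely $\langle p_1^{r_1}\cdots p_k^{r_k}\rangle$, $0\le r_i\le m_i$, $(r_i)\ne(0,\dots,0),(m_1,\dots,m_k)$; essential iff $r_j\ne m_j$ for all $j$. The essential ideal graph $\mathcal E_{\mathbb Z_n}$: vertices the nonzero proper ideals, distinct $I,K$ adjacent iff $I+K$ essential. For a nonessential nonzero proper ideal $I$, $\Xi_I=\{i:r_i=m_i\}$ and $[I]$ is the set of nonessential nonzero proper ideals $J$ with $\Xi_J=\Xi_I$. $\kappa(\Gamma)$ is the vertex connectivity (minimum number of vertices whose removal disconnects $\Gamma$; $\kappa(K_t)=t-1$). *)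

From mathcomp Require Import all_boot all_order all_algebra.
Set Implicit Arguments. Unset Strict Implicit. Unset Printing Implicit Defensive.
Import GRing.Theory.

Definition induced_rel (T : finType) (W : {set T}) (e : rel T) : rel T :=
  [rel x y | [&& x \in W, y \in W & e x y]].

Definition separating (T : finType) (V : {set T}) (e : rel T) (S : {set T}) : bool :=
  let W := V :\: S in
  (#|W| <= 1) ||
  [exists u, exists v, [&& u \in W, v \in W & ~~ connect (induced_rel W e) u v]].

(* kappa(G) = minimum size of a set of vertices whose removal disconnects G
   (or leaves at most one vertex, so that kappa(K_t) = t - 1). *)
Definition vconn (T : finType) (V : {set T}) (e : rel T) : nat :=
  \big[minn/#|V|]_(S : {set T} | (S \subset V) && separating V e S) #|S|.

Section Zn.
Variable n : nat.
Local Open Scope ring_scope.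

Definition is_ideal (I : {set 'Z_n}) : bool :=
  [&& (0 : 'Z_n) \in I,
      [forall x, forall y, ((x \in I) && (y \in I)) ==> (x + y \in I)] &
      [forall a, forall x, (x \in I) ==> (a * x \in I)]].

Definition zero_ideal : {set 'Z_n} := [set (0 : 'Z_n)].

Definition is_essential (I : {set 'Z_n}) : bool :=
  is_ideal I &&
  [forall J : {set 'Z_n}, (is_ideal J && (J != zero_ideal)) ==> (I :&: J != zero_ideal)].

Definition ideal_vertices : {set {set 'Z_n}} :=
  [set I : {set 'Z_n} | [&& is_ideal I, I != zero_ideal & I != setT]].

Definition ideal_sum (I K : {set 'Z_n}) : {set 'Z_n} :=
  [set x + y | x in I, y in K].

Definition ess_adj : rel {set 'Z_n} :=
  [rel I K | (I != K) && is_essential (ideal_sum I K)].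

Definition principal (a : nat) : {set 'Z_n} := [set (a%:R : 'Z_n) * x | x : 'Z_n].

(* Xi_I = { p_i : r_i = m_i }, i.e. the primes p_i with I contained in <p_i^{m_i}> *)
Definition Xi (I : {set 'Z_n}) : seq nat :=
  [seq p <- primes n | I \subset principal (p ^ logn p n)%N].

Definition ideal_class (I : {set 'Z_n}) : {set {set 'Z_n}} :=
  [set J in ideal_vertices | ~~ is_essential J & Xi J == Xi I].

End Zn.

Definition kappaE (n : nat) : nat := vconn (ideal_vertices n) (@ess_adj n).

From mathcomp Require Import all_boot all_order all_algebra zify.
Set Implicit Arguments. Unset Strict Implicit. Unset Printing Implicit Defensive.
Import GRing.Theory.

(* Every ideal of Z_n is principal, generated by a divisor d of n, and <d> is
   essential iff no full prime power p^(m_p) divides d.  Calling p saturated in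
   <d> when p^(m_p) | d, the sum of two ideals is essential iff no prime is
   saturated in both, so the essential ideal graph is a graph whose vertices
   carry a set of saturated primes, adjacent iff these sets are disjoint.
   Essential ideals (no saturated prime) are adjacent to every vertex, and
   [<p^(m_p)>] consists of the ideals saturated at p only.  The ideal
   <n / p^(m_p)> is saturated exactly off p, so deleting the essential ideals
   and [<p^(m_p)>] isolates it.  Deleting fewer vertices spares an essential
   ideal or a member of every class; members of distinct classes are adjacent,
   and every vertex is adjacent to the member of the class of a prime
   unsaturated in it, so the rest stays connected.  Hence for k >= 2 the
   connectivity is the number of essential ideals plus the least class size,
   while for k = 1 every ideal is essential and the graph is complete.  Listing
   the divisors by their exponent vectors gives prod m_i - 1 essential vertices
   and prod_(i <> j) m_i ideals in [<p_j^(m_j)>]. *)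

Lemma geq_bigmin_seq (I : eqType) (s : seq I) (P : pred I) (F : I -> nat) x p :
  p \in s -> P p -> \big[minn/x]_(q <- s | P q) F q <= F p.
Proof.
move=> + P_p; elim: s => // a s IH; rewrite inE big_cons.
case/predU1P=> [<- | /IH le_min_s]; first by rewrite P_p geq_minl.
by case: (P a); rewrite // geq_min le_min_s orbT.
Qed.

Lemma bigmin_seq_attained (I : eqType) (s : seq I) (F : I -> nat) x :
  s != [::] -> {in s, forall q, F q <= x} ->
  exists2 p, p \in s & \big[minn/x]_(q <- s) F q = F p.
Proof.
elim: s => // a s IH _ le_F_x; rewrite big_cons.
have le_a : F a <= x by apply: le_F_x; rewrite mem_head.
have [-> | s_nil] := eqVneq s [::].
  by exists a; rewrite ?mem_head // big_nil; apply/minn_idPl.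
have [p p_s ->] := IH s_nil (fun q q_s => le_F_x q (mem_behead (s := a :: s) q_s)).
have [le_ap | lt_pa] := leqP (F a) (F p).
  by exists a; rewrite ?mem_head //; apply/minn_idPl.
by exists p; rewrite ?inE ?p_s ?orbT //; apply/minn_idPr/ltnW.
Qed.

Section VertexConnectivity.
Variable T : finType.
Implicit Types (V S : {set T}) (e : rel T).

Lemma vconn_eq V e S : S \subset V -> separating V e S ->
  (forall S', S' \subset V -> #|S'| < #|S| -> ~~ separating V e S') ->
  vconn V e = #|S|.
Proof.
move=> sub_SV sep_S min_S; apply/eqP; rewrite eqn_leq; apply/andP; split.
  by apply: geq_bigmin_seq; rewrite ?mem_index_enum ?sub_SV.
rewrite /vconn; elim/big_ind: _ => [||S' /andP[sub_S'V sep_S']].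
- exact: subset_leq_card.
- by move=> a b le_a le_b; rewrite leq_min le_a le_b.
by rewrite leqNgt; apply: contraL sep_S' => /(min_S _ sub_S'V).
Qed.

Lemma eq_in_vconn V e1 e2 : {in V &, e1 =2 e2} -> vconn V e1 = vconn V e2.
Proof.
move=> eq_e; apply: eq_bigl => S; case sub_SV: (S \subset V) => //=.
have eq_W : induced_rel (V :\: S) e1 =2 induced_rel (V :\: S) e2.
  move=> x y; rewrite /induced_rel /=.
  case W_x: (x \in V :\: S); case W_y: (y \in V :\: S) => //=.
  by rewrite eq_e // (subsetP (subsetDl V S)).
rewrite /separating /=; congr (_ || _).
by apply: eq_existsb => u; apply: eq_existsb => v; rewrite (eq_connect eq_W).
Qed.

Lemma separating_isolated V e S x : x \in V :\: S ->
  (forall y, y \in V :\: S -> ~~ e x y) -> separating V e S.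
Proof.
move=> W_x isolated_x; rewrite /separating leqNgt.
case: ltnP => //= /card_gt1P[a [b [W_a W_b neq_ab]]].
have [y W_y neq_yx] : exists2 y, y \in V :\: S & y != x.
  by have [eq_ax | ] := eqVneq a x; [exists b; rewrite // -eq_ax eq_sym | exists a].
apply/existsP; exists x; apply/existsP; exists y; rewrite W_x W_y /=.
apply: contra neq_yx => /connectP[[|z p] /= path_xp -> //].
by case/andP: path_xp => /and3P[_ W_z]; rewrite (negbTE (isolated_x z W_z)).
Qed.

Lemma not_separating_hub V e S c : symmetric e -> 1 < #|V :\: S| ->
  (forall w, w \in V :\: S -> connect (induced_rel (V :\: S) e) w c) ->
  ~~ separating V e S.
Proof.
move=> sym_e big_W to_c; rewrite /separating leqNgt big_W /=.
have sym_W : connect_sym (induced_rel (V :\: S) e).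
  by apply: sym_connect_sym => x y; rewrite /induced_rel /= sym_e andbCA.
apply/existsPn=> u; apply/existsPn=> v; apply/negP=> /and3P[W_u W_v /negP]; apply.
by apply: connect_trans (to_c u W_u) _; rewrite sym_W to_c.
Qed.

End VertexConnectivity.

Section SupportGraph.
Variables (T : finType) (I : eqType) (V : {set T}) (ps : seq I) (supp : T -> I -> bool).

Definition support_adj : rel T :=
  fun u v => (u != v) && all (fun p => ~~ (supp u p && supp v p)) ps.

Definition supp_null : {set T} := [set v in V | all (fun p => ~~ supp v p) ps].

Definition supp_single (p : I) : {set T} :=
  [set v in V | all (fun q => supp v q == (q == p)) ps].

Hypothesis supp_proper : {in V, forall v, has (fun p => ~~ supp v p) ps}.

Lemma support_adj_sym : symmetric support_adj.
Proof.
move=> u v; rewrite /support_adj eq_sym; congr (_ && _).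
by apply: eq_all => p; rewrite andbC.
Qed.

Lemma supp_null_sub : supp_null \subset V.
Proof. by apply/subsetP=> v; rewrite inE => /andP[]. Qed.

Lemma supp_single_sub p : supp_single p \subset V.
Proof. by apply/subsetP=> v; rewrite inE => /andP[]. Qed.

Lemma mem_supp_null v :
  (v \in supp_null) = (v \in V) && all (fun p => ~~ supp v p) ps.
Proof. by rewrite inE. Qed.

Lemma mem_supp_single v p :
  (v \in supp_single p) = (v \in V) && all (fun q => supp v q == (q == p)) ps.
Proof. by rewrite inE. Qed.

Lemma supp_singleP v p q : q \in ps -> v \in supp_single p -> supp v q = (q == p).
Proof. by move=> q_ps; rewrite inE => /andP[_ /allP/(_ q q_ps)/eqP]. Qed.

Lemma support_adj_null u v : u \in supp_null -> u != v -> support_adj u v.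
Proof.
rewrite inE => /andP[_ /allP null_u] neq_uv; rewrite /support_adj neq_uv.
by apply/allP=> p p_ps; rewrite (negbTE (null_u p p_ps)).
Qed.

Lemma support_adj_single u v p : ~~ supp u p -> v \in supp_single p -> u != v ->
  support_adj u v.
Proof.
move=> u_p single_v neq_uv; rewrite /support_adj neq_uv; apply/allP=> q q_ps.
by rewrite (supp_singleP q_ps single_v); case: eqP => [-> | _]; rewrite ?andbT ?andbF.
Qed.

Lemma supp_null_single_disjoint p : p \in ps -> supp_null :&: supp_single p = set0.
Proof.
move=> p_ps; apply/setP=> v; rewrite in_setI in_set0.
apply/negbTE/negP=> /andP[+ single_v]; rewrite mem_supp_null => /andP[_ /allP null_v].
by move: (null_v p p_ps); rewrite (supp_singleP p_ps single_v) eqxx.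
Qed.

Lemma supp_single_disjoint p q : p \in ps -> p != q -> supp_single p :&: supp_single q = set0.
Proof.
move=> p_ps neq_pq; apply/setP=> v; rewrite in_setI in_set0.
apply/negbTE/negP=> /andP[single_p single_q].
move: (supp_singleP p_ps single_p) (supp_singleP p_ps single_q).
by rewrite eqxx (negbTE neq_pq) => ->.
Qed.

Lemma not_separating_null S u : 1 < #|V :\: S| -> u \in supp_null -> u \in V :\: S ->
  ~~ separating V support_adj S.
Proof.
move=> big_W null_u W_u; apply: (not_separating_hub support_adj_sym big_W) => w W_w.
have [-> | neq_wu] := eqVneq w u; first exact: connect0.
by apply: connect1; rewrite /induced_rel /= W_w W_u support_adj_sym support_adj_null // eq_sym.
Qed.

Lemma supp_null_eqV : size ps <= 1 -> supp_null = V.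
Proof.
move=> small_ps; apply/eqP; rewrite eqEsubset supp_null_sub; apply/subsetP=> u V_u.
rewrite mem_supp_null V_u /=; have /hasP[p p_ps u_p] := supp_proper V_u.
apply/allP=> q q_ps; suff -> : q = p by [].
by move: small_ps p_ps q_ps; case: ps => [|a [|]] //= _; rewrite !inE => /eqP-> /eqP->.
Qed.

Lemma vconn_support_le1 : size ps <= 1 -> V != set0 ->
  vconn V support_adj = #|V|.-1.
Proof.
move=> small_ps /set0Pn[v V_v].
have card_Vv : #|V :\ v| = #|V|.-1 by rewrite (cardsD1 v V) V_v.
rewrite -card_Vv; apply: vconn_eq => [||S sub_SV].
- exact: subsetDl.
- by rewrite /separating setDDr setDv set0U (setIidPr _) ?sub1set // cards1.
rewrite card_Vv => small_S.
have big_W : 1 < #|V :\: S| by rewrite cardsD (setIidPr sub_SV); lia.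
have [u W_u] : exists u, u \in V :\: S by apply/card_gt0P; lia.
apply: (not_separating_null big_W _ W_u).
by rewrite supp_null_eqV // (subsetP (subsetDl V S)).
Qed.

Section LargePalette.
Hypothesis ps_uniq : uniq ps.
Hypothesis ps_size : 1 < size ps.
Hypothesis cofactor :
  {in ps, forall p, exists2 x, x \in V & all (fun q => supp x q == (q != p)) ps}.
Hypothesis supp_single_nonempty : {in ps, forall p, supp_single p != set0}.

Local Notation eta := (\big[minn/#|V|]_(p <- ps) #|supp_single p|).

Lemma exists_colour : exists p, p \in ps.
Proof. by case: ps ps_size => // p s _; exists p; rewrite mem_head. Qed.

Lemma exists_other p : exists2 q, q \in ps & q != p.
Proof.
move: ps_uniq ps_size; case: ps => [|a [|b s]] //= /andP[]; rewrite inE negb_or.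
case/andP=> neq_ab _ _ _; have [-> | neq_pa] := eqVneq p a.
  by exists b; rewrite ?inE ?eqxx ?orbT // eq_sym.
by exists a; rewrite ?mem_head // eq_sym.
Qed.

Lemma card_null_single p : p \in ps ->
  #|supp_null :|: supp_single p| = #|supp_null| + #|supp_single p|.
Proof. by move=> p_ps; rewrite cardsU supp_null_single_disjoint // cards0 subn0. Qed.

Lemma separating_null_single p : p \in ps ->
  separating V support_adj (supp_null :|: supp_single p).
Proof.
move=> p_ps; have [x V_x supp_x] := cofactor p_ps.
have supp_xE q : q \in ps -> supp x q = (q != p) by move=> q_ps; apply/eqP; apply: (allP supp_x).
have [q q_ps neq_qp] := exists_other p.
apply: (@separating_isolated _ _ _ _ x).
  rewrite in_setD in_setU negb_or V_x andbT !inE V_x /=; apply/andP; split.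
    by apply/allPn; exists q; rewrite // supp_xE ?neq_qp.
  by apply/allPn; exists p; rewrite // supp_xE // !eqxx.
move=> y; rewrite !inE negb_or => /andP[/andP[not_null not_single] V_y].
apply: contra not_single => /andP[_ /allP disj]; rewrite V_y /=; apply/allP=> r r_ps.
have [-> | neq_rp] := eqVneq r p; last first.
  by move: (disj r r_ps); rewrite supp_xE // neq_rp /= => /negbTE->.
move: not_null; rewrite V_y /= => /allPn[r' r'_ps /negbNE y_r'].
have [<- | neq_r'p] := eqVneq r' p; first by rewrite y_r' eqxx.
by move: (disj r' r'_ps); rewrite supp_xE // neq_r'p y_r'.
Qed.

Section SmallSet.
Variable S : {set T}.
Hypothesis small_S : #|S| < #|supp_null| + eta.

Lemma card_survivors_gt1 : 1 < #|V :\: S|.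
Proof.
have [p p_ps] := exists_colour.
have [q q_ps neq_qp] := exists_other p.
set X := supp_null :|: supp_single p :|: supp_single q.
have card_X : #|X| = #|supp_null| + #|supp_single p| + #|supp_single q|.
  rewrite cardsU card_null_single // setIUl supp_null_single_disjoint //.
  by rewrite supp_single_disjoint 1?eq_sym // setU0 cards0 subn0.
have eta_p : eta <= #|supp_single p| by apply: geq_bigmin_seq.
have card_q : 0 < #|supp_single q| by rewrite card_gt0 supp_single_nonempty.
have : #|X :\: S| <= #|V :\: S|.
  by apply/subset_leq_card/setSD; rewrite !subUset supp_null_sub !supp_single_sub.
by rewrite cardsD; move: (subset_leq_card (subsetIr X S)); lia.
Qed.

Lemma supp_single_survivor p : p \in ps -> supp_null \subset S ->
  exists2 s, s \in supp_single p & s \in V :\: S.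
Proof.
move=> p_ps null_S.
have : #|supp_null :|: (supp_single p :&: S)| <= #|S|.
  by apply: subset_leq_card; rewrite subUset null_S subsetIr.
rewrite cardsU setIA supp_null_single_disjoint // set0I cards0 subn0 => card_S.
have eta_p : eta <= #|supp_single p| by apply: geq_bigmin_seq.
have /subsetPn[s single_s S_s] : ~~ (supp_single p \subset S).
  by apply: contraTN small_S => /setIidPl sub_pS; move: card_S; rewrite sub_pS; lia.
by exists s; rewrite // inE S_s (subsetP (supp_single_sub p)).
Qed.

Lemma not_separating_small : ~~ separating V support_adj S.
Proof.
have big_W := card_survivors_gt1.
have [null_S | /subsetPn[u null_u S_u]] := boolP (supp_null \subset S); last first.
  by apply: (not_separating_null big_W null_u); rewrite inE S_u (subsetP supp_null_sub).
have step x y : x \in V :\: S -> y \in V :\: S -> (x != y -> support_adj x y) ->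
    connect (induced_rel (V :\: S) support_adj) x y.
  move=> W_x W_y adj_xy; have [-> | /adj_xy xy] := eqVneq x y; first exact: connect0.
  by apply: connect1; rewrite /induced_rel /= W_x W_y.
have link x y qx qy : qy \in ps -> qx != qy -> x \in supp_single qx -> y \in supp_single qy ->
    x \in V :\: S -> y \in V :\: S -> connect (induced_rel (V :\: S) support_adj) x y.
  move=> qy_ps neq_q single_x single_y W_x W_y; apply: step => //.
  by apply: support_adj_single single_y; rewrite (supp_singleP qy_ps single_x) eq_sym.
have [p p_ps] := exists_colour.
have [c single_c W_c] := supp_single_survivor p_ps null_S.
apply: (not_separating_hub support_adj_sym big_W (c := c)) => w W_w.
have /hasP[q q_ps w_q] := supp_proper (subsetP (subsetDl V S) w W_w).
have [s single_s W_s] := supp_single_survivor q_ps null_S.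
apply: connect_trans (step w s W_w W_s (support_adj_single w_q single_s)) _.
have [eq_qp | neq_qp] := eqVneq q p; last exact: link single_s single_c W_s W_c.
have [p' p'_ps neq_p'p] := exists_other p.
have [c' single_c' W_c'] := supp_single_survivor p'_ps null_S.
rewrite eq_qp in single_s.
apply: connect_trans (link _ _ _ _ p'_ps _ single_s single_c' W_s W_c') _; first by rewrite eq_sym.
exact: link single_c' single_c W_c' W_c.
Qed.

End SmallSet.

Theorem vconn_support :
  vconn V support_adj = #|supp_null| + \big[minn/#|V|]_(p <- ps) #|supp_single p|.
Proof.
have ps_nil : ps != [::] by case: ps ps_size.
have card_le p : p \in ps -> #|supp_single p| <= #|V|.
  by move=> _; apply/subset_leq_card/supp_single_sub.
have [p p_ps eta_p] := bigmin_seq_attained ps_nil card_le.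
rewrite eta_p -card_null_single //; apply: vconn_eq => [||S _ small_S].
- by rewrite subUset supp_null_sub supp_single_sub.
- exact: separating_null_single.
by apply: not_separating_small; rewrite eta_p -card_null_single.
Qed.

End LargePalette.
End SupportGraph.

Lemma dvdn_modn_dvd d m a : d %| m -> (d %| a %% m) = (d %| a).
Proof. by move=> d_m; rewrite /dvdn modn_dvdm. Qed.

Lemma logn_prod (I : Type) (r : seq I) (P : pred I) (F : I -> nat) q :
  (forall i, 0 < F i) ->
  logn q (\prod_(i <- r | P i) F i) = \sum_(i <- r | P i) logn q (F i).
Proof.
move=> F_gt0; elim: r => [|a r IH]; first by rewrite !big_nil logn1.
by rewrite !big_cons; case: (P a); rewrite // lognM ?IH ?prodn_gt0.
Qed.

Lemma card_ord_pred N (A : pred nat) : #|[pred e : 'I_N | A e]| = count A (iota 0 N).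
Proof.
rewrite -val_enum_ord count_map -size_filter -(card_uniqP _); last first.
  by rewrite filter_uniq // enum_uniq.
by apply: eq_card => e; rewrite mem_filter mem_enum andbT.
Qed.

Lemma count_iota_ltn m : count (fun e => e < m) (iota 0 m.+1) = m.
Proof.
rewrite -addn1 iotaD count_cat /= ltnn /= !addn0.
rewrite (@eq_in_count _ _ predT) ?count_predT ?size_iota // => e.
by rewrite mem_iota.
Qed.

Lemma count_iota_eq m : count (fun e => e == m) (iota 0 m.+1) = 1.
Proof. by rewrite (@eq_count _ _ (pred1 m)) // count_uniq_mem ?iota_uniq // mem_iota ltnSn. Qed.

Lemma dvdn_from_log m n : 0 < m -> 0 < n -> (forall p, logn p m <= logn p n) -> m %| n.
Proof.
move=> m_gt0 n_gt0 le_log; apply/dvdn_partP => // p.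
by rewrite mem_primes p_part => /and3P[p_pr _ _]; rewrite pfactor_dvdn.
Qed.

Lemma pfactor_gt1 p n : p \in primes n -> 1 < p ^ logn p n.
Proof.
move=> p_n; have p_pr : prime p by move: p_n; rewrite mem_primes => /andP[].
by rewrite -{1}(expn0 p) ltn_exp2l ?prime_gt1 // logn_gt0.
Qed.

Lemma dvdn_mul_primeE n q d : 0 < n -> prime q -> d %| n ->
  (d * q %| n) = ~~ (q ^ logn q n %| d).
Proof.
move=> n_gt0 q_pr d_n; have d_gt0 := dvdn_gt0 n_gt0 d_n.
rewrite pfactor_dvdn // -ltnNge.
have log_dq r : logn r (d * q) = logn r d + (r == q).
  by rewrite lognM ?(prime_gt0 q_pr) // (logn_prime _ q_pr).
apply/idP/idP => [dq_n | lt_log].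
  by have := dvdn_leq_log q n_gt0 dq_n; rewrite log_dq eqxx addn1.
apply: dvdn_from_log => // [|r]; first by rewrite muln_gt0 d_gt0 prime_gt0.
by rewrite log_dq; case: eqP => [-> | _]; rewrite ?addn1 ?addn0 ?dvdn_leq_log.
Qed.

Lemma proper_divisor_mul_prime n e : 0 < n -> e %| n -> e != n ->
  exists2 q, prime q & e * q %| n.
Proof.
move=> n_gt0 e_n neq_en; have e_gt0 := dvdn_gt0 n_gt0 e_n.
have ne_gt1 : 1 < n %/ e.
  rewrite ltn_neqAle divn_gt0 // dvdn_leq // andbT eq_sym.
  by apply: contra neq_en => /eqP ne1; rewrite -[n in _ == n](divnK e_n) ne1 mul1n.
by have [q q_pr q_ne] := pdivP ne_gt1; exists q; rewrite // mulnC -dvdn_divRL.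
Qed.

Lemma coprime_pfactor_cofactor n p : 0 < n -> prime p ->
  coprime (p ^ logn p n) (n %/ p ^ logn p n).
Proof.
move=> n_gt0 p_pr; have [n' cop_n' def_n] := pfactor_coprime p_pr n_gt0.
by rewrite {2}def_n mulnK ?expn_gt0 ?prime_gt0 // coprimeXl.
Qed.

Lemma pfactor_dvdn_cofactor n p q : 0 < n -> prime p -> prime q -> q != p -> q %| n ->
  q ^ logn q n %| n %/ p ^ logn p n.
Proof.
move=> n_gt0 p_pr q_pr neq_qp q_n; have [n' cop_n' def_n] := pfactor_coprime p_pr n_gt0.
rewrite {2}def_n mulnK ?expn_gt0 ?prime_gt0 //.
have : q ^ logn q n %| n' * p ^ logn p n by rewrite -def_n pfactor_dvdnn.
by rewrite Gauss_dvdl // coprimeXl // coprimeXr // prime_coprime // dvdn_prime2.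
Qed.

Section ExponentVectors.
Variable n : nat.
Hypothesis n_gt0 : 0 < n.
Local Notation ps := (primes n).
Local Notation k := (size (primes n)).
Local Notation pr i := (nth 0 (primes n) i).

(* The i-th coordinate is the exponent of the i-th prime of [primes n]. *)
Definition exponent_box := {dffun forall i : 'I_k, 'I_(logn (pr i) n).+1}.

Definition of_exponents (f : exponent_box) : nat := \prod_(i < k) pr i ^ f i.

Definition exponents_of (d : nat) : exponent_box :=
  [ffun i : 'I_k => inord (logn (pr i) d) : 'I_(logn (pr i) n).+1].

Lemma prime_nth_primes (i : 'I_k) : prime (pr i).
Proof. by have := mem_nth 0 (ltn_ord i); rewrite mem_primes => /andP[]. Qed.

Lemma logn_of_exponents q f : logn q (of_exponents f) = \sum_(i < k | pr i == q) f i.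
Proof.
rewrite logn_prod => [|i]; last by rewrite expn_gt0 prime_gt0 ?prime_nth_primes.
rewrite [RHS]big_mkcond; apply: eq_bigr => i _.
by rewrite lognX (logn_prime q (prime_nth_primes i)) eq_sym; case: eqP; rewrite ?muln1 ?muln0.
Qed.

Lemma logn_of_exponents_nth (i : 'I_k) f : logn (pr i) (of_exponents f) = f i.
Proof.
rewrite logn_of_exponents (big_pred1 i) // => j /=.
by rewrite nth_uniq ?primes_uniq.
Qed.

Lemma logn_of_exponents_out q f : q \notin ps -> logn q (of_exponents f) = 0.
Proof.
move=> q_ps; rewrite logn_of_exponents big_pred0 // => i.
by apply: contraNF q_ps => /eqP <-; apply: mem_nth.
Qed.

Lemma of_exponents_gt0 f : 0 < of_exponents f.
Proof. by rewrite prodn_gt0 // => i; rewrite expn_gt0 prime_gt0 ?prime_nth_primes. Qed.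

Lemma of_exponents_inj : injective of_exponents.
Proof.
move=> f g eq_fg; apply/ffunP=> i; apply: val_inj.
by rewrite /= -!logn_of_exponents_nth eq_fg.
Qed.

Lemma nth_primesP q : q \in ps -> exists i : 'I_k, q = pr i.
Proof.
move=> q_ps; have lt_q : index q ps < k by rewrite index_mem.
by exists (Ordinal lt_q); rewrite /= nth_index.
Qed.

Lemma of_exponents_dvd f : of_exponents f %| n.
Proof.
apply: dvdn_from_log => // [|q]; first exact: of_exponents_gt0.
have [/nth_primesP[i ->] | q_out] := boolP (q \in ps); last by rewrite logn_of_exponents_out.
by rewrite logn_of_exponents_nth -ltnS ltn_ord.
Qed.

Lemma of_exponentsK d : d %| n -> of_exponents (exponents_of d) = d.
Proof.
move=> d_n; have d_gt0 := dvdn_gt0 n_gt0 d_n.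
apply: eqn_from_log; rewrite ?of_exponents_gt0 // => q.
have [/nth_primesP[i ->] | q_out] := boolP (q \in ps).
  by rewrite logn_of_exponents_nth ffunE inordK // ltnS dvdn_leq_log.
rewrite logn_of_exponents_out //; apply/esym/eqP; rewrite -leqn0 leqNgt logn_gt0.
by apply: contra q_out; rewrite !mem_primes n_gt0 => /and3P[-> _ /dvdn_trans->].
Qed.

End ExponentVectors.

Section PrincipalIdeals.
Variable n : nat.
Hypothesis n_gt1 : 1 < n.
Local Open Scope ring_scope.
Local Notation P := (principal n).
Implicit Types (I : {set 'Z_n}) (x y : 'Z_n).

Let n_gt0 : (0 < n)%N := ltnW n_gt1.

Lemma val_Zn_nat a : val (a%:R : 'Z_n) = (a %% n)%N.
Proof. exact: val_Zp_nat. Qed.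

Lemma val_Zn_lt x : (val x < n)%N.
Proof. by have := ltn_ord x; rewrite [X in (_ < X)%N -> _]Zp_cast. Qed.

Lemma Zn_valK x : (val x)%:R = x.
Proof. by apply: val_inj; rewrite val_Zn_nat modn_small ?val_Zn_lt. Qed.

Lemma val_ZnD x y : val (x + y) = ((val x + val y) %% n)%N.
Proof. by rewrite -{1}(Zn_valK x) -{1}(Zn_valK y) -natrD val_Zn_nat. Qed.

Lemma val_ZnM x y : val (x * y) = ((val x * val y) %% n)%N.
Proof. by rewrite -{1}(Zn_valK x) -{1}(Zn_valK y) -natrM val_Zn_nat. Qed.

Lemma Zn_nat_eq a b : ((a%:R : 'Z_n) == b%:R) = (a == b %[mod n])%N.
Proof. by rewrite -val_eqE /= !val_Zn_nat. Qed.

Lemma Zn_nat_eq0 a : (n %| a)%N -> (a%:R : 'Z_n) = 0.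
Proof. by move=> n_a; apply: val_inj; rewrite val_Zn_nat; apply/eqP. Qed.

Lemma Zn_val_eq0 x : (n %| val x)%N -> x = 0.
Proof. by rewrite -{2}(Zn_valK x); apply: Zn_nat_eq0. Qed.

Lemma mem_principal_gcd d y : (y \in P d) = (gcdn d n %| val y)%N.
Proof.
rewrite -{1}(Zn_valK y); have gcd_n := dvdn_gcdr d n.
apply/imsetP/idP => [[x _ /eqP] | /dvdnP[s ->]].
  rewrite -(Zn_valK x) -natrM Zn_nat_eq => /eqP eq_mod.
  by rewrite -(dvdn_modn_dvd _ gcd_n) eq_mod dvdn_modn_dvd // dvdn_mulr ?dvdn_gcdl.
have [u _ bezout] := Bezoutl d n_gt0; rewrite gcdnC in bezout.
exists (- (u * s)%:R); first by rewrite inE.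
rewrite mulrN -natrM; apply/eqP.
rewrite eq_sym -subr_eq0 -opprD oppr_eq0 -natrD; apply/eqP/Zn_nat_eq0.
by rewrite [X in (_ %| X)%N](_ : _ = (gcdn d n + u * d) * s)%N ?dvdn_mulr //; nia.
Qed.

Lemma mem_principal d y : (d %| n)%N -> (y \in P d) = (d %| val y)%N.
Proof. by move=> d_n; rewrite mem_principal_gcd (gcdn_idPl d_n). Qed.

Lemma principal_is_ideal d : is_ideal (P d).
Proof.
apply/and3P; split; first by rewrite mem_principal_gcd.
  apply/forallP=> x; apply/forallP=> y; apply/implyP=> /andP[].
  by rewrite !mem_principal_gcd val_ZnD dvdn_modn_dvd ?dvdn_gcdr //; apply: dvdn_add.
apply/forallP=> a; apply/forallP=> x; apply/implyP.
by rewrite !mem_principal_gcd val_ZnM dvdn_modn_dvd ?dvdn_gcdr //; apply: dvdn_mull.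
Qed.

Section OneIdeal.
Variable I : {set 'Z_n}.
Hypothesis I_ideal : is_ideal I.

Lemma ideal0 : 0 \in I.
Proof. by case/and3P: I_ideal. Qed.

Lemma idealD x y : x \in I -> y \in I -> x + y \in I.
Proof.
case/and3P: I_ideal => _ /forallP/(_ x)/forallP/(_ y)/implyP add_xy _ I_x I_y.
by apply: add_xy; rewrite I_x.
Qed.

Lemma idealM a x : x \in I -> a * x \in I.
Proof. by case/and3P: I_ideal => _ _ /forallP/(_ a)/forallP/(_ x)/implyP. Qed.

Lemma ideal_gcd a b : (a%:R : 'Z_n) \in I -> (b%:R : 'Z_n) \in I -> (gcdn a b)%:R \in I.
Proof.
case: (posnP a) => [-> _ // | a_gt0 I_a I_b]; first by rewrite gcd0n.
have [u _ /dvdnP[t def_t]] := Bezoutl b a_gt0.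
have -> : (gcdn a b)%:R = (t * a)%N%:R - (u * b)%N%:R :> 'Z_n by rewrite -def_t natrD addrK.
apply: idealD; first by rewrite natrM idealM.
by rewrite -mulN1r natrM mulrA idealM.
Qed.

End OneIdeal.

Definition ideal_gen (I : {set 'Z_n}) : nat := \big[gcdn/n]_(x in I) val x.

Lemma ideal_gen_dvd I : (ideal_gen I %| n)%N.
Proof. by rewrite /ideal_gen; elim/big_rec: _ => // x a _; apply: dvdn_trans (dvdn_gcdr _ _). Qed.

Lemma ideal_genE I : is_ideal I -> I = P (ideal_gen I).
Proof.
move=> I_ideal; apply/setP=> y; rewrite mem_principal ?ideal_gen_dvd //.
apply/idP/idP => [I_y | /dvdnP[s def_y]]; first by rewrite /ideal_gen (bigD1 y) //= dvdn_gcdl.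
rewrite -(Zn_valK y) def_y natrM idealM //.
rewrite /ideal_gen; elim/big_ind: _ => [||x I_x]; last by rewrite Zn_valK.
- by rewrite Zn_nat_eq0 // ideal0.
- exact: ideal_gcd.
Qed.

End PrincipalIdeals.

Section PrincipalLattice.
Variable n : nat.
Hypothesis n_gt1 : 1 < n.
Local Notation P := (principal n).
Local Notation ps := (primes n).

Let n_gt0 : 0 < n := ltnW n_gt1.

Lemma principal_subset d e : d %| n -> e %| n -> (P d \subset P e) = (e %| d).
Proof.
move=> d_n e_n; apply/subsetP/idP => [sub_de | e_d y]; last first.
  by rewrite !mem_principal // => /(dvdn_trans e_d).
have := sub_de (d%:R)%R; rewrite !mem_principal // val_Zn_nat // !dvdn_modn_dvd //.
by apply.
Qed.

Lemma principal_inj d e : d %| n -> e %| n -> P d = P e -> d = e.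
Proof.
move=> d_n e_n eq_de; apply/eqP; rewrite eqn_dvd.
by rewrite -(principal_subset d_n e_n) -(principal_subset e_n d_n) eq_de subxx.
Qed.

Lemma principal_n : P n = zero_ideal n.
Proof.
apply/setP=> y; rewrite mem_principal // !inE.
by apply/idP/eqP => [/(Zn_val_eq0 n_gt1) | ->]; rewrite ?dvdn0.
Qed.

Lemma principal_1 : P 1 = setT.
Proof. by apply/setP=> y; rewrite mem_principal ?dvd1n // inE. Qed.

Lemma principal_eq0 d : d %| n -> (P d == zero_ideal n) = (d == n).
Proof.
by move=> d_n; rewrite -principal_n; apply/eqP/eqP => [/principal_inj-> | ->].
Qed.

Lemma principal_eqT d : d %| n -> (P d == setT) = (d == 1).
Proof.
by move=> d_n; rewrite -principal_1; apply/eqP/eqP => [/principal_inj-> | ->].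
Qed.

Lemma ideal_gen_principal d : d %| n -> ideal_gen (P d) = d.
Proof.
move=> d_n; apply: principal_inj; rewrite ?ideal_gen_dvd //.
by rewrite -ideal_genE ?principal_is_ideal.
Qed.

Lemma ideal_sum_principal d e : d %| n -> e %| n -> ideal_sum (P d) (P e) = P (gcdn d e).
Proof.
move=> d_n e_n; have de_n : gcdn d e %| n by apply: dvdn_trans (dvdn_gcdl _ _) d_n.
apply/setP=> y; rewrite mem_principal //; apply/imset2P/idP => [[x z] | /dvdnP[s def_y]].
  rewrite !mem_principal // => d_x e_z ->; rewrite val_ZnD // dvdn_modn_dvd //.
  by apply: dvdn_add; [apply: dvdn_trans d_x | apply: dvdn_trans e_z];
    rewrite ?dvdn_gcdl ?dvdn_gcdr.
have [u _ /dvdnP[t def_t]] := Bezoutl e (dvdn_gt0 n_gt0 d_n).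
exists (s * t * d)%:R%R (- (s * u * e)%:R)%R.
- by rewrite mem_principal // val_Zn_nat // dvdn_modn_dvd // dvdn_mull.
- rewrite -mulN1r mem_principal // val_ZnM // dvdn_modn_dvd // dvdn_mull //.
  by rewrite val_Zn_nat // dvdn_modn_dvd // dvdn_mull.
rewrite -(Zn_valK n_gt1 y) def_y; apply/eqP; rewrite eq_sym subr_eq -natrD; apply/eqP.
by congr (_%:R)%R; rewrite -!mulnA -mulnDr def_t; nia.
Qed.

(* If p^(m_p) | d then <d> meets <n / p^(m_p)> trivially; otherwise n / q lies in
   <d> and in every nonzero <e>, for a prime q dividing n / e. *)
Lemma essential_principal d : d %| n ->
  is_essential (P d) = all (fun p => ~~ (p ^ logn p n %| d)) ps.
Proof.
move=> d_n; apply/idP/allP => [/andP[_ /forallP ess] p p_ps | unsat].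
  have p_pr : prime p by move: p_ps; rewrite mem_primes => /andP[].
  set e := n %/ p ^ logn p n; have e_n : e %| n := dvdn_div (pfactor_dvdnn p n).
  have e_neq_n : e != n by rewrite neq_ltn ltn_Pdiv ?pfactor_gt1.
  apply/negP=> full_d; move/implyP: (ess (P e)); rewrite principal_is_ideal //=.
  rewrite principal_eq0 // e_neq_n => /(_ isT); apply/negP/negPn/eqP/setP=> y.
  rewrite !inE !mem_principal //; apply/idP/eqP => [/andP[d_y e_y] | ->]; last by rewrite !dvdn0.
  apply: Zn_val_eq0 => //.
  have : p ^ logn p n * e %| val y.
    by rewrite Gauss_dvd ?coprime_pfactor_cofactor // e_y (dvdn_trans full_d d_y).
  by rewrite mulnC divnK ?pfactor_dvdnn.
apply/andP; split; first exact: principal_is_ideal.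
apply/forall_inP=> J /andP[J_ideal J_neq0]; rewrite (ideal_genE n_gt1 J_ideal) in J_neq0 *.
set e := ideal_gen J in J_neq0 *; have e_n : e %| n := ideal_gen_dvd J.
rewrite principal_eq0 // in J_neq0.
have [q q_pr eq_n] := proper_divisor_mul_prime n_gt0 e_n J_neq0.
have q_n : q %| n := dvdn_trans (dvdn_mull e (dvdnn q)) eq_n.
have q_ps : q \in ps by rewrite mem_primes q_pr n_gt0 q_n.
have d_nq : d %| n %/ q by rewrite dvdn_divRL // (dvdn_mul_primeE n_gt0 q_pr d_n) unsat.
have e_nq : e %| n %/ q by rewrite dvdn_divRL.
have nq_gt0 : 0 < n %/ q by rewrite divn_gt0 ?(prime_gt0 q_pr) // dvdn_leq.
have val_nq : val ((n %/ q)%:R : 'Z_n)%R = n %/ q.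
  by rewrite val_Zn_nat // modn_small // ltn_Pdiv // prime_gt1.
apply/negP=> /eqP/setP/(_ (n %/ q)%:R%R); rewrite !inE !mem_principal // val_nq d_nq e_nq /=.
by move/esym/eqP/(congr1 val); rewrite val_nq => nq0; rewrite nq0 in nq_gt0.
Qed.

End PrincipalLattice.

Lemma filter_eq_seq1 (T : eqType) (f : pred T) (s : seq T) p : uniq s -> p \in s ->
  (filter f s == [:: p]) = all (fun q => f q == (q == p)) s.
Proof.
move=> s_uniq p_s; apply/eqP/allP => [eq_fs q q_s | f_eq].
  by rewrite -(mem_seq1 q p) -eq_fs mem_filter q_s andbT.
rewrite -(filter_pred1_uniq s_uniq p_s); apply: eq_in_filter => q q_s.
exact/eqP/f_eq.
Qed.

(* [saturated I p] means r_p = m_p for I = <p_1^r_1 ... p_k^r_k>, i.e. p is in Xi_I. *)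
Definition saturated (n : nat) (I : {set 'Z_n}) (p : nat) : bool :=
  I \subset principal n (p ^ logn p n).

Section IdealGraph.
Variable n : nat.
Hypothesis n_gt1 : 1 < n.
Local Notation P := (principal n).
Local Notation ps := (primes n).
Local Notation V := (ideal_vertices n).
Local Notation sat := (@saturated n).

Let n_gt0 : 0 < n := ltnW n_gt1.

Lemma saturated_principal d p : d %| n -> sat (P d) p = (p ^ logn p n %| d).
Proof. by move=> d_n; rewrite /saturated principal_subset ?pfactor_dvdnn. Qed.

Lemma saturatedE I p : is_ideal I -> sat I p = (p ^ logn p n %| ideal_gen I).
Proof.
by move=> I_ideal; rewrite {1}(ideal_genE n_gt1 I_ideal) saturated_principal ?ideal_gen_dvd.
Qed.

Lemma essentialE I : is_ideal I -> is_essential I = all (fun p => ~~ sat I p) ps.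
Proof.
move=> I_ideal; rewrite {1}(ideal_genE n_gt1 I_ideal) essential_principal ?ideal_gen_dvd //.
by apply: eq_all => p; rewrite saturatedE.
Qed.

Lemma ess_adjE I K : is_ideal I -> is_ideal K -> ess_adj I K = support_adj ps sat I K.
Proof.
move=> I_ideal K_ideal; rewrite /ess_adj /support_adj /=; congr (_ && _).
rewrite (ideal_genE n_gt1 I_ideal) (ideal_genE n_gt1 K_ideal).
rewrite ideal_sum_principal ?ideal_gen_dvd // essential_principal //.
  by apply: eq_all => p; rewrite dvdn_gcd !saturated_principal ?ideal_gen_dvd.
exact: dvdn_trans (dvdn_gcdl _ _) (ideal_gen_dvd I).
Qed.

Lemma vertex_ideal I : I \in V -> is_ideal I.
Proof. by rewrite inE => /and3P[]. Qed.

Lemma vertex_unsaturated : {in V, forall I, has (fun p => ~~ sat I p) ps}.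
Proof.
move=> I I_V; have I_ideal := vertex_ideal I_V.
move: I_V; rewrite inE (ideal_genE n_gt1 I_ideal) principal_eq0 ?ideal_gen_dvd //.
case/and3P=> _ neq_n _.
have [q q_pr gq_n] := proper_divisor_mul_prime n_gt0 (ideal_gen_dvd I) neq_n.
apply/hasP; exists q.
  by rewrite mem_primes q_pr n_gt0 (dvdn_trans (dvdn_mull _ (dvdnn q)) gq_n).
by rewrite saturated_principal ?ideal_gen_dvd // -dvdn_mul_primeE ?ideal_gen_dvd.
Qed.

Lemma kappaE_support : kappaE n = vconn V (support_adj ps sat).
Proof.
by apply: eq_in_vconn => I K /vertex_ideal I_ideal /vertex_ideal K_ideal; apply: ess_adjE.
Qed.

Lemma saturated_pfactor p q : p \in ps -> q \in ps -> sat (P (p ^ logn p n)) q = (q == p).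
Proof.
move=> p_ps q_ps; rewrite saturated_principal ?pfactor_dvdnn //.
have [-> | neq_qp] := eqVneq q p; first exact: dvdnn.
have [p_pr q_pr] : prime p /\ prime q by move: p_ps q_ps; rewrite !mem_primes => /andP[? _] /andP[].
have q_qm : q %| q ^ logn q n by rewrite dvdn_exp // logn_gt0.
apply: contraNF neq_qp => /(dvdn_trans q_qm).
by rewrite Euclid_dvdX // dvdn_prime2 // => /andP[].
Qed.

Lemma Xi_saturated I : Xi I = filter (sat I) ps.
Proof. by []. Qed.

Lemma mem_ideal_class I J :
  (J \in ideal_class I) = [&& J \in V, ~~ is_essential J & Xi J == Xi I].
Proof. by rewrite inE. Qed.

Lemma ideal_classE p : p \in ps -> ideal_class (P (p ^ logn p n)) = supp_single V ps sat p.
Proof.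
move=> p_ps; apply/setP=> J; rewrite mem_ideal_class mem_supp_single !Xi_saturated.
have -> : filter (sat (P (p ^ logn p n))) ps = [:: p].
  apply/eqP; rewrite filter_eq_seq1 ?primes_uniq //.
  by apply/allP=> q q_ps; rewrite saturated_pfactor.
case J_V: (J \in V) => //=; rewrite filter_eq_seq1 ?primes_uniq //.
case single_J: (all _ _); rewrite ?andbF // andbT essentialE ?vertex_ideal //.
by apply/allPn; exists p; rewrite // (eqP (allP single_J p p_ps)) eqxx.
Qed.

Section SeveralPrimes.
Hypothesis ps_size : 1 < size ps.

Lemma cofactor_vertex p : p \in ps ->
  exists2 x, x \in V & all (fun q => sat x q == (q != p)) ps.
Proof.
move=> p_ps; have p_pr : prime p by move: p_ps; rewrite mem_primes => /andP[].
set e := n %/ p ^ logn p n; have e_n : e %| n := dvdn_div (pfactor_dvdnn p n).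
have sat_e q : q \in ps -> sat (P e) q = (q != p).
  move=> q_ps; rewrite saturated_principal //.
  have [-> | neq_qp] := eqVneq q p; last first.
    by apply: pfactor_dvdn_cofactor; move: q_ps; rewrite ?mem_primes => /and3P[].
  apply/negP=> /gcdn_idPl; rewrite (eqP (coprime_pfactor_cofactor n_gt0 p_pr)) => pm1.
  by have := pfactor_gt1 p_ps; rewrite -pm1.
exists (P e); last by apply/allP=> q q_ps; rewrite sat_e.
have [q q_ps neq_qp] := exists_other (primes_uniq n) ps_size p.
rewrite inE principal_is_ideal // principal_eq0 // principal_eqT //=; apply/andP; split.
  by rewrite neq_ltn ltn_Pdiv ?pfactor_gt1.
apply/eqP=> e1; move: (sat_e q q_ps); rewrite neq_qp saturated_principal // e1 dvdn1.
by move=> /eqP qm1; have := pfactor_gt1 q_ps; rewrite qm1.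
Qed.

Lemma pfactor_vertex p : p \in ps -> P (p ^ logn p n) \in supp_single V ps sat p.
Proof.
move=> p_ps; rewrite inE; apply/andP; split; last first.
  by apply/allP=> q q_ps; rewrite saturated_pfactor.
have [q q_ps neq_qp] := exists_other (primes_uniq n) ps_size p.
rewrite inE principal_is_ideal // principal_eq0 ?pfactor_dvdnn // principal_eqT ?pfactor_dvdnn //=.
rewrite [_ != 1]neq_ltn (pfactor_gt1 p_ps) orbT andbT; apply: contra_neq neq_qp => pm_n.
by apply/eqP; rewrite -(saturated_pfactor p_ps q_ps) pm_n saturated_principal ?pfactor_dvdnn.
Qed.

End SeveralPrimes.
End IdealGraph.

Section Counting.
Variable n : nat.
Hypothesis n_gt1 : 1 < n.
Local Notation P := (principal n).
Local Notation ps := (primes n).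
Local Notation V := (ideal_vertices n).
Local Notation sat := (@saturated n).
Implicit Types I : {set 'Z_n}.

Let n_gt0 : 0 < n := ltnW n_gt1.

Lemma card_ideals_by_exponents (A : nat -> nat -> bool) :
  #|[set I : {set 'Z_n} | is_ideal I & all (fun p => A p (logn p (ideal_gen I))) ps]| =
  \prod_(p <- ps) count (A p) (iota 0 (logn p n).+1).
Proof.
pose F (i : 'I_(size ps)) := [pred e : 'I_(logn (nth 0 ps i) n).+1 | A (nth 0 ps i) e].
have -> : [set I : {set 'Z_n} | is_ideal I & all (fun p => A p (logn p (ideal_gen I))) ps] =
          [set P (of_exponents f) | f in family F].
  apply/setP=> I; rewrite inE; apply/andP/imsetP => [[I_ideal /allP A_I] | [f F_f ->]].
    exists (exponents_of n (ideal_gen I)); last first.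
      by rewrite of_exponentsK ?ideal_gen_dvd // -ideal_genE.
    apply/familyP=> i; rewrite inE ffunE inordK ?ltnS ?dvdn_leq_log ?ideal_gen_dvd //.
    by apply: A_I; apply: mem_nth.
  split; first exact: principal_is_ideal.
  rewrite ideal_gen_principal //; last exact: of_exponents_dvd.
  apply/allP=> q /nth_primesP[i ->].
  by rewrite logn_of_exponents_nth; apply: (familyP F_f i).
have inj : injective (fun f : exponent_box n => P (of_exponents f)).
  move=> f1 f2 eq_P; apply: of_exponents_inj.
  by apply: (principal_inj n_gt1) eq_P; apply: of_exponents_dvd.
rewrite (card_imset _ inj) card_family /image_mem foldrE big_map big_enum /= (big_nth 0) big_mkord.
by apply: eq_bigr => i _; apply: card_ord_pred.
Qed.

Lemma logn_ideal_gen_le I p : logn p (ideal_gen I) <= logn p n.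
Proof. exact: dvdn_leq_log (ideal_gen_dvd I). Qed.

Lemma saturated_logn I p : is_ideal I -> p \in ps ->
  sat I p = (logn p n <= logn p (ideal_gen I)).
Proof.
move=> I_ideal; rewrite mem_primes saturatedE // => /andP[p_pr _].
by rewrite pfactor_dvdn // (dvdn_gt0 n_gt0 (ideal_gen_dvd I)).
Qed.

Lemma mem_ideal_vertices I :
  (I \in V) = [&& is_ideal I, ideal_gen I != n & ideal_gen I != 1].
Proof.
rewrite inE; case I_ideal: (is_ideal I) => //=.
by rewrite {1 2}(ideal_genE n_gt1 I_ideal) principal_eq0 ?principal_eqT ?ideal_gen_dvd.
Qed.

Lemma card_supp_null : #|supp_null V ps sat| = \prod_(p <- ps) logn p n - 1.
Proof.
set A := [set I : {set 'Z_n} | is_ideal I & all (fun p => logn p (ideal_gen I) < logn p n) ps].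
have [p p_ps] : exists p, p \in ps.
  have : ps != [::] by rewrite primes_eq0 -leqNgt.
  by case: ps => // p s _; exists p; rewrite mem_head.
have -> : supp_null V ps sat = A :\ setT.
  apply/setP=> I; rewrite mem_supp_null mem_ideal_vertices in_setD1 inE.
  case I_ideal: (is_ideal I); last by rewrite !andbF.
  have -> : (I != setT) = (ideal_gen I != 1).
    by rewrite {1}(ideal_genE n_gt1 I_ideal) principal_eqT ?ideal_gen_dvd.
  have -> : all (fun p => ~~ sat I p) ps = all (fun p => logn p (ideal_gen I) < logn p n) ps.
    by apply: eq_in_all => q q_ps; rewrite saturated_logn // -ltnNge.
  case all_lt: (all _ _); last by rewrite !andbF.
  have gen_n : ideal_gen I != n by apply: contraTneq (allP all_lt p p_ps) => ->; rewrite ltnn.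
  by rewrite gen_n !andbT.
have T_A : setT \in A.
  rewrite inE -principal_1 // principal_is_ideal // ideal_gen_principal // ?dvd1n //.
  by apply/allP=> q q_ps; rewrite logn1 logn_gt0.
have -> : \prod_(p <- ps) logn p n = #|A|.
  rewrite (card_ideals_by_exponents (fun p e => e < logn p n)).
  by apply: eq_bigr => q _; rewrite count_iota_ltn.
by rewrite (cardsD1 setT A) T_A add1n subn1.
Qed.

Lemma card_supp_single p : 1 < size ps -> p \in ps ->
  #|supp_single V ps sat p| = \prod_(q <- ps | q != p) logn q n.
Proof.
move=> ps_size p_ps.
pose B q e := if q == p then e == logn q n else e < logn q n.
have -> : supp_single V ps sat p =
          [set I : {set 'Z_n} | is_ideal I & all (fun q => B q (logn q (ideal_gen I))) ps].
  apply/setP=> I; rewrite mem_supp_single mem_ideal_vertices inE.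
  case I_ideal: (is_ideal I); last by [].
  have -> : all (fun q => sat I q == (q == p)) ps = all (fun q => B q (logn q (ideal_gen I))) ps.
    apply: eq_in_all => q q_ps; rewrite saturated_logn // /B.
    have le_log := logn_ideal_gen_le I q.
    have [_ | _] := eqVneq q p; first by rewrite eqb_id eqn_leq le_log.
    by rewrite eqbF_neg -ltnNge.
  case all_B: (all _ _); last by rewrite !andbF.
  have [q q_ps neq_qp] := exists_other (primes_uniq n) ps_size p.
  have := allP all_B q q_ps; rewrite /B (negbTE neq_qp) => lt_q.
  have := allP all_B p p_ps; rewrite /B eqxx => eq_p.
  rewrite !andTb !andbT; apply/andP; split; first by apply: contraTneq lt_q => ->; rewrite ltnn.
  by apply: contraTneq eq_p => ->; rewrite logn1 eq_sym -lt0n logn_gt0.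
rewrite card_ideals_by_exponents [RHS]big_mkcond; apply: eq_bigr => q _.
by rewrite /B eq_sym; case: eqP => _; rewrite ?count_iota_eq ?count_iota_ltn.
Qed.

End Counting.

Section KappaE.
Variable n : nat.
Hypothesis n_gt1 : 1 < n.
Local Notation P := (principal n).
Local Notation ps := (primes n).
Local Notation V := (ideal_vertices n).
Local Notation sat := (@saturated n).

Lemma kappaE_prime_power p : ps = [:: p] -> 1 < logn p n -> kappaE n = logn p n - 2.
Proof.
move=> ps_p m_gt1.
have card_V : #|V| = logn p n - 1.
  rewrite -(supp_null_eqV (vertex_unsaturated n_gt1)) ?card_supp_null // ps_p //.
  by rewrite big_seq1.
rewrite kappaE_support // (vconn_support_le1 (vertex_unsaturated n_gt1)) ?ps_p //.
  by rewrite card_V; lia.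
by rewrite -card_gt0 card_V subn_gt0.
Qed.

Lemma card_ideal_class p : 1 < size ps -> p \in ps ->
  #|ideal_class (P (p ^ logn p n))| = \prod_(q <- ps | q != p) logn q n.
Proof. by move=> ps_size p_ps; rewrite ideal_classE ?card_supp_single. Qed.

Lemma kappaE_several_primes : 1 < size ps ->
  kappaE n = \prod_(p <- ps) logn p n - 1 +
             \big[minn/#|V|]_(p <- ps) #|ideal_class (P (p ^ logn p n))|.
Proof.
move=> ps_size; rewrite kappaE_support // vconn_support ?primes_uniq //.
- rewrite card_supp_null //; congr (_ + _).
  by apply: eq_big_seq => p p_ps; rewrite ideal_classE.
- exact: (vertex_unsaturated n_gt1).
- exact: (cofactor_vertex n_gt1).
by move=> p p_ps; apply/set0Pn; exists (P (p ^ logn p n)); apply: pfactor_vertex.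
Qed.

End KappaE.

Theorem mainTheorem16 (n : nat) :
  1 < n -> ~~ prime n -> ~~ [exists p : 'I_n.+1, prime p && (n == p ^ 2)] ->
  let ps := primes n in
  let k := size ps in
  let T := (\prod_(p <- ps) (logn p n).+1) - 2 in
  let m := (\prod_(p <- ps) logn p n) - 1 in
  let eta := \big[minn/#|ideal_vertices n|]_(p <- ps)
               #|ideal_class (principal n (p ^ logn p n))| in
  [/\ (forall p, ps = [:: p] -> 2 < logn p n -> kappaE n = T - 1),
      (1 < k -> all (fun p => logn p n == 1) ps -> kappaE n = 1) &
      (1 < k -> has (fun p => 1 < logn p n) ps ->
         kappaE n = m + eta /\
         eta = \big[minn/#|ideal_vertices n|]_(p <- ps)
                  \prod_(q <- ps | q != p) logn q n)].
Proof.
(* The hypotheses excluding primes and squares of primes follow from those of each case. *)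
move=> n_gt1 _ _ ps k T m eta.
have prod_1 (P : pred nat) :
    all (fun p => logn p n == 1) ps -> \prod_(q <- ps | P q) logn q n = 1.
  by move=> /allP all_1; rewrite big1_seq // => q /andP[_ /all_1/eqP].
split.
- move=> p ps_p m_gt2; rewrite (kappaE_prime_power n_gt1 ps_p) ?(ltnW m_gt2) //.
  by rewrite /T ps_p big_seq1; lia.
- move=> k_gt1 all_1; rewrite (kappaE_several_primes n_gt1 k_gt1) prod_1 // subnn add0n.
  have ps_nil : ps != [::] by rewrite -size_eq0 -lt0n ltnW.
  have card_le q : q \in ps ->
      #|ideal_class (principal n (q ^ logn q n))| <= #|ideal_vertices n|.
    by move=> q_ps; rewrite ideal_classE ?subset_leq_card ?supp_single_sub.
  have [p p_ps ->] := bigmin_seq_attained ps_nil card_le.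
  by rewrite card_ideal_class ?prod_1.
move=> k_gt1 _; split; first by rewrite (kappaE_several_primes n_gt1 k_gt1).
by apply: eq_big_seq => p p_ps; rewrite card_ideal_class.
Qed.
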